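(* Let $\mathbb F_q$ be a finite field, and let $B_1 \subseteq \mathbb F_q^{m_1}$ and $B_2 \subseteq \mathbb F_q^{m_2}$. Suppose $B_1$ is $C_1$-weakly Sidorenko and $B_2$ is $C_2$-weakly Sidorenko. Then $B_1 \times B_2 := \{(x,y) \in \mathbb F_q^{m_1+m_2} : x \in B_1, y \in B_2\}$ is $C_1C_2$-weakly Sidorenko. In particular, if $B_1$ and $B_2$ are both Sidorenko, then so is $B_1 \times B_2$.
   Context: An affine relation on elements $x_1,\ldots,x_k$ of $\mathbb F_q^n$ is an equation $\sum_i \lambda_i x_i = 0$ with $\lambda_i \in \mathbb F_q$ and $\sum_i \lambda_i = 0$; it is nontrivial if some $\lambda_i \neq 0$. A set is affinely independent if it has no nontrivial affine relation; the affine rank $\mathrm{rank}_{\mathrm{aff}}(B)$ of $B \subseteq \mathbb F_q^m$ is the size of a maximal affinely independent subset of $B$. For $B \subseteq \mathbb F_q^m$ and $A \subseteq \mathbb F_q^n$, an affine homomorphism $B \to A$ is a map $\varphi: B \to A$ that extends to an affine map $\mathbb F_q^m \to \mathbb F_q^n$ (equivalently, preserves all affine relations); $\mathrm{hom}_{\mathrm{aff}}(B,A)$ denotes the number of affine homomorphisms $B \to A$. For a real $C$, $B \subseteq \mathbb F_q^m$ is called $C$-weakly Sidorenko if for every $n$ and every $A \subseteq \mathbb F_q^n$ with $|A| = \alpha N$, where $N = q^n$, we have $\mathrm{hom}_{\mathrm{aff}}(B,A) \geq \alpha^C N^{\mathrm{rank}_{\mathrm{aff}}(B)}$. $B$ is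 called Sidorenko if it is $|B|$-weakly Sidorenko. *)

From HB Require Import structures.
From mathcomp Require Import all_boot all_order all_algebra all_field.
From mathcomp Require Import reals exp Rstruct.
From Stdlib Require Import Rdefinitions.
Set Implicit Arguments. Unset Strict Implicit. Unset Printing Implicit Defensive.
Import Order.TTheory GRing.Theory Num.Theory.
Local Open Scope ring_scope.

Section Aff.
Variable F : finFieldType.

Definition aff_indep (m : nat) (S : {set 'rV[F]_m}) : bool :=
  [forall lam : {ffun 'rV[F]_m -> F},
    ((\sum_(x in S) lam x == 0) && (\sum_(x in S) lam x *: x == 0))
      ==> [forall x in S, lam x == 0]].

(* affine rank: size of a maximal (= maximum, by the matroid property)
   affinely independent subset of B *)
Definition rank_aff (m : nat) (B : {set 'rV[F]_m}) : nat :=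
  \max_(S : {set 'rV[F]_m} | (S \subset B) && aff_indep S) #|S|.

(* affine homomorphisms B -> A, i.e. maps phi : B -> A that extend to an
   affine map x |-> x *m M + c of F^m -> F^n.  A map on B is encoded as a
   finite function on F^m that vanishes outside B. *)
Definition hom_aff_set (m n : nat) (B : {set 'rV[F]_m}) (A : {set 'rV[F]_n})
  : {set {ffun 'rV[F]_m -> 'rV[F]_n}} :=
  [set f : {ffun 'rV[F]_m -> 'rV[F]_n} |
    [&& [forall x in B, f x \in A],
        [forall x in ~: B, f x == 0] &
        [exists M : 'M[F]_(m, n), exists c : 'rV[F]_n,
           [forall x in B, f x == x *m M + c]]]].

Definition hom_aff (m n : nat) (B : {set 'rV[F]_m}) (A : {set 'rV[F]_n}) : nat :=
  #|hom_aff_set B A|.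

Definition weakly_sidorenko (m : nat) (B : {set 'rV[F]_m}) (C : R) : Prop :=
  forall (n : nat) (A : {set 'rV[F]_n}),
    let N : R := (#|F| ^ n)%:R in
    let alpha : R := #|A|%:R / N in
    powR alpha C * N ^+ rank_aff B <= (hom_aff B A)%:R.

Definition sidorenko (m : nat) (B : {set 'rV[F]_m}) : Prop :=
  weakly_sidorenko B (#|B|%:R).

Definition prod_set (m1 m2 : nat) (B1 : {set 'rV[F]_m1}) (B2 : {set 'rV[F]_m2})
  : {set 'rV[F]_(m1 + m2)} :=
  [set row_mx x y | x in B1, y in B2].

End Aff.

From HB Require Import structures.
From mathcomp Require Import all_boot all_order all_algebra all_field.
From mathcomp Require classical_sets.
From mathcomp Require Import interval_inference convex hoelder.
From mathcomp Require Import reals exp Rstruct.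
From mathcomp Require Import ring.
From Stdlib Require Import Rdefinitions.
Set Implicit Arguments. Unset Strict Implicit. Unset Printing Implicit Defensive.
Import Order.TTheory GRing.Theory Num.Theory.
Local Open Scope ring_scope.

(* Let N = q^n, let r1, r2 be the affine ranks of B1, B2 and alpha the density
   of A.  Affine maps on B2 are y |-> c(y) W, where c(y) are coordinates of
   (y, 1) in a basis of the span of the (y, 1), y in B2, and W ranges over the
   N^r2 matrices of size r2 x n.  For each W let A_W be the set of anchors a
   with a + c(B2) W inside A, of density alpha_W.  Every homomorphism B2 -> A
   is a + c(.) W for some a in A_W, so the mean of the alpha_W is at least
   hom(B2, A) / N^r2 >= alpha^C2.  Conversely g : B1 -> A_W and W give the
   homomorphism (x, y) |-> g x + c(y) W of B1 x B2, which determines (g, W)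
   up to the shift c(y0) W; hence
     N hom(B1 x B2, A) >= sum_W hom(B1, A_W) >= N^r1 sum_W alpha_W^C1.
   As C1 >= r1 >= 1, Jensen's inequality bounds the right-hand side below by
   N^(r1 + r2) alpha^(C1 C2), and rank_aff (B1 x B2) <= r1 + r2 - 1. *)

Section AffineRank.
Variable F : finFieldType.
Implicit Types m n : nat.

Definition homog m (x : 'rV[F]_m) : 'rV[F]_(m + 1) := row_mx x 1%:M.

Definition homog_mx m (S : {set 'rV[F]_m}) : 'M[F]_(#|S|, m + 1) :=
  \matrix_(i < #|S|) homog (enum_val i).

Lemma scalar_mx11_eq0 (a : F) : (a%:M == 0 :> 'M_1) = (a == 0).
Proof. by apply/eqP/eqP => [/matrixP/(_ 0 0)|->]; rewrite ?mxE ?raddf0. Qed.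

Lemma homog_neq0 m (x : 'rV[F]_m) : homog x != 0.
Proof. by rewrite row_mx_eq0 scalar_mx11_eq0 oner_eq0 andbF. Qed.

Lemma homog_sub m (S : {set 'rV[F]_m}) x : x \in S -> (homog x <= homog_mx S)%MS.
Proof.
move=> xS; rewrite -(enum_rankK_in xS xS) -(rowK (fun i => homog (enum_val i))).
exact: row_sub.
Qed.

Lemma homog_mx_subP m (S : {set 'rV[F]_m}) p (V : 'M_(p, m + 1)) :
  reflect {in S, forall x, (homog x <= V)%MS} (homog_mx S <= V)%MS.
Proof.
apply: (iffP idP) => [sSV x xS | sSV]; first exact: submx_trans (homog_sub xS) sSV.
by apply/row_subP => i; rewrite rowK sSV ?enum_valP.
Qed.

Lemma homog_mxS m (S T : {set 'rV[F]_m}) : S \subset T -> (homog_mx S <= homog_mx T)%MS.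
Proof. by move/subsetP => sST; apply/homog_mx_subP => x /sST; apply: homog_sub. Qed.

Lemma sum_homog m I (r : seq I) (P : pred I) (c : I -> F) (f : I -> 'rV[F]_m) :
  \sum_(i <- r | P i) c i *: homog (f i) =
  row_mx (\sum_(i <- r | P i) c i *: f i) (\sum_(i <- r | P i) c i)%:M.
Proof.
elim/big_rec3: _ => [|i a b c' _ ->]; first by rewrite raddf0 row_mx0.
by rewrite scale_row_mx add_row_mx scale_scalar_mx mulr1 raddfD.
Qed.

Definition coef_row m (S : {set 'rV[F]_m}) (lam : {ffun 'rV[F]_m -> F}) : 'rV[F]_#|S| :=
  \row_i lam (enum_val i).

Lemma coef_row_surj m (S : {set 'rV[F]_m}) (v : 'rV[F]_#|S|) :
  exists lam, coef_row S lam = v.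
Proof.
exists [ffun x => \sum_(i | enum_val i == x) v 0 i]; apply/rowP => i.
rewrite !mxE ffunE (big_pred1 i) // => j /=; exact: (inj_eq enum_val_inj).
Qed.

Lemma coef_row_eq0 m (S : {set 'rV[F]_m}) lam :
  (coef_row S lam == 0) = [forall x in S, lam x == 0].
Proof.
apply/eqP/forall_inP => [lam0 x xS | lam0].
  have /rowP/(_ (enum_rank_in xS x)) := lam0.
  by rewrite !mxE enum_rankK_in // => ->.
by apply/rowP => i; rewrite !mxE; apply/eqP/lam0/enum_valP.
Qed.

Lemma mul_coef_row m (S : {set 'rV[F]_m}) lam :
  coef_row S lam *m homog_mx S = \sum_(x in S) lam x *: homog x.
Proof.
rewrite mulmx_sum_row [RHS]big_enum_val /=.
by apply: eq_bigr => i _; rewrite rowK mxE.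
Qed.

Lemma aff_indepE m (S : {set 'rV[F]_m}) : aff_indep S = row_free (homog_mx S).
Proof.
have homog_rel lam : (\sum_(x in S) lam x *: homog x == 0) =
    (\sum_(x in S) lam x == 0) && (\sum_(x in S) lam x *: x == 0).
  by rewrite sum_homog row_mx_eq0 scalar_mx11_eq0 andbC.
apply/forallP/idP => [indep | free lam].
  apply/inj_row_free => v; have [lam <-] := coef_row_surj v.
  move/eqP; rewrite mul_coef_row homog_rel => /(implyP (indep lam)).
  by rewrite -coef_row_eq0 => /eqP.
by apply/implyP; rewrite -homog_rel -mul_coef_row mulmx_free_eq0 // coef_row_eq0.
Qed.

Lemma rank_affE m (B : {set 'rV[F]_m}) : rank_aff B = \rank (homog_mx B).
Proof.
apply/eqP; rewrite eqn_leq; apply/andP; split.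
  apply/bigmax_leqP => S /andP [sSB]; rewrite aff_indepE => /eqP <-.
  exact/mxrankS/homog_mxS.
set f := maxrankfun (homog_mx B); set S := [set enum_val (f i) | i in 'I__].
have cardS : #|S| = \rank (homog_mx B).
  by rewrite card_imset ?card_ord // => i j /enum_val_inj /maxrankfun_inj.
have sSB : S \subset B by apply/subsetP => _ /imsetP [i _ ->]; apply: enum_valP.
have freeS : row_free (homog_mx S).
  rewrite /row_free eqn_leq rank_leq_row /=.
  apply: (@leq_trans (\rank (rowsub f (homog_mx B)))).
    by rewrite eq_maxrowsub cardS.
  apply/mxrankS/row_subP => i; rewrite row_rowsub rowK homog_sub //.
  by apply/imsetP; exists i.
by rewrite -cardS; apply: leq_bigmax_cond; rewrite sSB aff_indepE.
Qed.

Lemma rank_aff_gt0 m (B : {set 'rV[F]_m}) x : x \in B -> (0 < rank_aff B)%nat.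
Proof.
move=> xB; rewrite rank_affE (leq_trans _ (mxrankS (homog_sub xB))) //.
by rewrite rank_rV homog_neq0.
Qed.

Definition affine_mx m n (M : 'M[F]_(m, n)) (c : 'rV[F]_n) : 'M[F]_(m + 1, n + 1) :=
  block_mx M 0 c 1%:M.

Lemma homog_affine m n (x : 'rV[F]_m) M (c : 'rV[F]_n) :
  homog (x *m M + c) = homog x *m affine_mx M c.
Proof. by rewrite mul_row_block !mul1mx mulmx0 add0r. Qed.

Lemma rank_aff_affine_image m n (B : {set 'rV[F]_m}) (f : 'rV[F]_m -> 'rV[F]_n) M c :
  (forall x, f x = x *m M + c) -> (rank_aff (f @: B) <= rank_aff B)%nat.
Proof.
move=> fE; rewrite !rank_affE; apply: leq_trans (mxrankM_maxl _ (affine_mx M c)).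
apply/mxrankS/homog_mx_subP => _ /imsetP [x xB ->].
by rewrite fE homog_affine submxMr // homog_sub.
Qed.

Lemma prod_setE m1 m2 (B1 : {set 'rV[F]_m1}) (B2 : {set 'rV[F]_m2}) x y :
  (row_mx x y \in prod_set B1 B2) = (x \in B1) && (y \in B2).
Proof.
apply/imset2P/andP => [[x' y' xB yB /eq_row_mx [-> ->]] // | [xB yB]].
by exists x y.
Qed.

Lemma prod_setP m1 m2 (B1 : {set 'rV[F]_m1}) (B2 : {set 'rV[F]_m2}) z :
  (z \in prod_set B1 B2) = (lsubmx z \in B1) && (rsubmx z \in B2).
Proof. by rewrite -{1}(hsubmxK z) prod_setE. Qed.

Lemma homog_row_mx_split m1 m2 (x x0 : 'rV[F]_m1) (y y0 : 'rV[F]_m2) :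
  homog (row_mx x y) =
  homog (row_mx x y0) + homog (row_mx x0 y) - homog (row_mx x0 y0).
Proof. by rewrite !opp_row_mx !add_row_mx !addrK [y0 + y]addrC addrK. Qed.

(* The affine spans of B1 x {y0} and {x0} x B2 cover B1 x B2 and meet at
   (x0, y0), so the affine rank is subadditive up to one. *)
Lemma rank_aff_prod m1 m2 (B1 : {set 'rV[F]_m1}) (B2 : {set 'rV[F]_m2}) x0 y0 :
  x0 \in B1 -> y0 \in B2 ->
  (rank_aff (prod_set B1 B2) + 1 <= rank_aff B1 + rank_aff B2)%nat.
Proof.
move=> x0B y0B.
set E1 := (fun x => row_mx x y0) @: B1; set E2 := (fun y => row_mx x0 y) @: B2.
have E1P x : x \in B1 -> (homog (row_mx x y0) <= homog_mx E1)%MS.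
  by move=> xB; apply/homog_sub/imset_f.
have E2P y : y \in B2 -> (homog (row_mx x0 y) <= homog_mx E2)%MS.
  by move=> yB; apply/homog_sub/imset_f.
have sub_sum : (homog_mx (prod_set B1 B2) <= homog_mx E1 + homog_mx E2)%MS.
  apply/homog_mx_subP => _ /imset2P [x y xB yB ->].
  rewrite (homog_row_mx_split x x0 y y0) addmx_sub ?eqmx_opp ?addmx_sub //.
  - exact: submx_trans (E1P _ xB) (addsmxSl _ _).
  - exact: submx_trans (E2P _ yB) (addsmxSr _ _).
  - exact: submx_trans (E1P _ x0B) (addsmxSl _ _).
have cap_gt0 : (0 < \rank (homog_mx E1 :&: homog_mx E2))%nat.
  have : (homog (row_mx x0 y0) <= homog_mx E1 :&: homog_mx E2)%MS.
    by rewrite sub_capmx E1P // E2P.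
  by move/mxrankS; rewrite rank_rV homog_neq0.
have rank_E1 : (rank_aff E1 <= rank_aff B1)%nat.
  apply: (@rank_aff_affine_image _ _ _ _ (row_mx 1%:M 0) (row_mx 0 y0)) => x.
  by rewrite mul_mx_row mulmx1 mulmx0 add_row_mx addr0 add0r.
have rank_E2 : (rank_aff E2 <= rank_aff B2)%nat.
  apply: (@rank_aff_affine_image _ _ _ _ (row_mx 0 1%:M) (row_mx x0 0)) => y.
  by rewrite mul_mx_row mulmx1 mulmx0 add_row_mx addr0 add0r.
apply: leq_trans (leq_add rank_E1 rank_E2).
by rewrite !rank_affE -mxrank_sum_cap leq_add // mxrankS.
Qed.

End AffineRank.

Lemma card_setX_dep (T1 T2 : finType) (S : T1 -> {set T2}) :
  #|[set p : T1 * T2 | p.2 \in S p.1]| = (\sum_a #|S a|)%nat.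
Proof.
rewrite -sum1dep_card; under [RHS]eq_bigr do rewrite -sum1_card.
by rewrite pair_big_dep.
Qed.

Section AffineMapCount.
Variable F : finFieldType.
Implicit Types m n : nat.

Lemma hom_affP m n (B : {set 'rV[F]_m}) (A : {set 'rV[F]_n})
    (f : {ffun 'rV[F]_m -> 'rV[F]_n}) :
  reflect [/\ {in B, forall x, f x \in A}, {in ~: B, forall x, f x = 0} &
             exists M c, {in B, forall x, f x = x *m M + c}]
          (f \in hom_aff_set B A).
Proof.
rewrite inE; apply: (iffP and3P) => [[/forall_inP fA /forall_inP f0 fM] | ].
  split=> [//|x /f0 /eqP //|]; have /existsP [M /existsP [c /forall_inP {}fM]] := fM.
  by exists M, c => x /fM /eqP.
case=> fA f0 [M [c fM]]; split; first exact/forall_inP.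
  by apply/forall_inP => x /f0 ->.
by apply/existsP; exists M; apply/existsP; exists c; apply/forall_inP => x /fM ->.
Qed.

Lemma homog_mul_col_mx m n (y : 'rV[F]_m) (M : 'M[F]_(m, n)) c :
  homog y *m col_mx M c = y *m M + c.
Proof. by rewrite mul_row_col mul1mx. Qed.

Lemma homog_mulmx m n (y : 'rV[F]_m) (Z : 'M[F]_(m + 1, n)) :
  homog y *m Z = y *m usubmx Z + dsubmx Z.
Proof. by rewrite -{1}(vsubmxK Z) homog_mul_col_mx. Qed.

Section Coordinates.
Variables (m : nat) (B : {set 'rV[F]_m}).
Local Notation d := (\rank (homog_mx B)).
Local Notation basis := (row_base (homog_mx B)).

(* Affine maps on B are exactly the maps y |-> aff_coord y *m W. *)
Definition aff_coord (y : 'rV[F]_m) : 'rV[F]_d := homog y *m pinvmx basis.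

Lemma aff_coordK y : y \in B -> aff_coord y *m basis = homog y.
Proof. by move=> yB; rewrite mulmxKpV // eq_row_base homog_sub. Qed.

Lemma aff_coord_inj n (W W' : 'M[F]_(d, n)) :
  {in B, forall y, aff_coord y *m W = aff_coord y *m W'} -> W = W'.
Proof.
move=> eqW; apply/eqP; rewrite -subr_eq0; apply/eqP.
have vanish : homog_mx B *m (pinvmx basis *m (W - W')) = 0.
  apply/row_matrixP => i; rewrite row0 row_mul rowK mulmxA mulmxBr.
  by rewrite eqW ?subrr ?enum_valP.
have [K basisE] : exists K, basis = K *m homog_mx B.
  by apply/submxP; rewrite eq_row_base.
rewrite -[W - W']mul1mx -(mulmxVp (row_base_free (homog_mx B))).
by rewrite {1}basisE -2!mulmxA vanish mulmx0.
Qed.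

Variables (n : nat) (A : {set 'rV[F]_n}).

Definition anchors (W : 'M[F]_(d, n)) : {set 'rV[F]_n} :=
  [set a | [forall y in B, a + aff_coord y *m W \in A]].

Lemma anchorsP W a :
  reflect {in B, forall y, a + aff_coord y *m W \in A} (a \in anchors W).
Proof. by rewrite inE; apply: forall_inP. Qed.

Lemma hom_aff_card_le :
  (hom_aff B A * #|{: 'rV[F]_n}| <= \sum_W #|anchors W|)%nat.
Proof.
rewrite -card_setX_dep.
pose hom_of (p : 'M[F]_(d, n) * 'rV[F]_n) :=
  ([ffun y => if y \in B then p.2 + aff_coord y *m p.1 else 0], p.2).
rewrite -cardsT -cardsX (leq_trans _ (leq_imset_card hom_of _)) //.
apply/subset_leq_card/subsetP => -[f a]; rewrite inE in_setT andbT.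
case/hom_affP => fA f0 [M [c fM]].
pose W := basis *m col_mx M (c - a).
have fW y : y \in B -> a + aff_coord y *m W = f y.
  by move=> yB; rewrite mulmxA aff_coordK // homog_mul_col_mx fM // addrCA subrKC.
apply/imsetP; exists (W, a).
  by rewrite inE; apply/anchorsP => y yB; rewrite fW ?fA.
congr pair; apply/ffunP => y; rewrite ffunE.
by case: ifPn => yB; [rewrite fW | rewrite f0 ?inE].
Qed.

End Coordinates.

#[global] Arguments anchors {m} B {n} A W.

Section ProductMaps.
Variables (m1 m2 n : nat) (B1 : {set 'rV[F]_m1}) (B2 : {set 'rV[F]_m2}).
Variable A : {set 'rV[F]_n}.
Local Notation d := (\rank (homog_mx B2)).

Definition prod_map (W : 'M[F]_(d, n)) (g : {ffun 'rV[F]_m1 -> 'rV[F]_n}) :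
    {ffun 'rV[F]_(m1 + m2) -> 'rV[F]_n} :=
  [ffun z => if z \in prod_set B1 B2
             then g (lsubmx z) + aff_coord B2 (rsubmx z) *m W else 0].

Lemma prod_mapE W g x y : x \in B1 -> y \in B2 ->
  prod_map W g (row_mx x y) = g x + aff_coord B2 y *m W.
Proof. by move=> xB yB; rewrite ffunE prod_setE xB yB row_mxKl row_mxKr. Qed.

Lemma prod_map_hom W g : g \in hom_aff_set B1 (anchors B2 A W) ->
  prod_map W g \in hom_aff_set (prod_set B1 B2) A.
Proof.
case/hom_affP => gA _ [M [c gM]]; apply/hom_affP; split.
- move=> z zB; rewrite ffunE zB; move: zB; rewrite prod_setP => /andP [lB rB].
  by have /anchorsP := gA _ lB; apply.
- by move=> z; rewrite inE ffunE => /negbTE ->.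
- exists (col_mx M (usubmx (pinvmx (row_base (homog_mx B2)) *m W))).
  exists (c + dsubmx (pinvmx (row_base (homog_mx B2)) *m W)) => z zB.
  rewrite ffunE zB; move: zB; rewrite prod_setP => /andP [lB _].
  rewrite gM // /aff_coord -mulmxA homog_mulmx -{3}(hsubmxK z) mul_row_col.
  by rewrite addrACA.
Qed.

Variables (x0 : 'rV[F]_m1) (y0 : 'rV[F]_m2).
Hypotheses (x0B : x0 \in B1) (y0B : y0 \in B2).

(* The value at (x0, y0) only fixes g x0 + aff_coord y0 *m W, so the shift
   aff_coord y0 *m W must be recorded to recover (W, g). *)
Lemma prod_map_inj :
  {in [set p | p.2 \in hom_aff_set B1 (anchors B2 A p.1)] &,
    injective (fun p => (prod_map p.1 p.2, aff_coord B2 y0 *m p.1))}.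
Proof.
move=> [W g] [W' g'] /[1!inE] /hom_affP [_ g0 _] /[1!inE] /hom_affP [_ g'0 _].
move=> [eq_map eq_shift].
have eq_g x : x \in B1 -> g x = g' x.
  move=> xB; have /ffunP/(_ (row_mx x y0)) := eq_map.
  by rewrite !prod_mapE // eq_shift => /addIr.
have eq_W : W = W'.
  apply: aff_coord_inj => y yB; have /ffunP/(_ (row_mx x0 y)) := eq_map.
  by rewrite !prod_mapE // eq_g // => /addrI.
congr pair => //; apply/ffunP => x.
by have [/eq_g // | xB] := boolP (x \in B1); rewrite g0 ?g'0 ?inE.
Qed.

Lemma sum_hom_aff_anchors_le :
  (\sum_W hom_aff B1 (anchors B2 A W)
     <= hom_aff (prod_set B1 B2) A * #|{: 'rV[F]_n}|)%nat.
Proof.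
rewrite /hom_aff -(card_setX_dep (fun W => hom_aff_set B1 (anchors B2 A W))).
rewrite -(card_in_imset prod_map_inj) -cardsT -cardsX.
apply/subset_leq_card/subsetP => _ /imsetP [[W g] /[1!inE] gB ->].
by rewrite inE in_setT andbT prod_map_hom.
Qed.

End ProductMaps.

End AffineMapCount.

Lemma powR_le1 (a c : R) : 0 <= a <= 1 -> 0 <= c -> powR a c <= 1.
Proof.
move=> /andP [a0 a1] c0; have [-> | a_neq0] := eqVneq a 0.
  by rewrite /powR eqxx; case: (c == 0).
by rewrite -(powRr0 a) ger_powR // lt0r a_neq0 a0.
Qed.

Lemma powR_convex (p w x y : R) : 1 <= p -> 0 <= w <= 1 -> 0 <= x -> 0 <= y ->
  powR (w * x + (1 - w) * y) p <= w * powR x p + (1 - w) * powR y p.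
Proof.
move=> p1 /andP [w0 w1] x0 y0.
have := @convex_powR R p p1 (Itv01 w0 w1) x y.
by rewrite !classical_sets.inE /= !in_itv /= !andbT !convRE; apply.
Qed.

Lemma jensen_powR_seq (I : Type) (p : R) (r : seq I) (G : I -> R) :
  1 <= p -> (forall i, 0 <= G i) -> (0 < size r)%nat ->
  (size r)%:R * powR ((\sum_(i <- r) G i) / (size r)%:R) p
    <= \sum_(i <- r) powR (G i) p.
Proof.
move=> p1 G0; elim: r => [//|a [|b r] IH] _.
  by rewrite !big_seq1 divr1 mul1r.
have {IH} := IH isT; set k := size (b :: r); set S := \sum_(i <- b :: r) G i => IH.
rewrite big_cons -/S [size _]/= -/k.
have k0 : 0 < k%:R :> R by rewrite ltr0n.
have k1 : 0 < k.+1%:R :> R by rewrite ltr0n.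
have S0 : 0 <= S by rewrite sumr_ge0.
set w : R := k.+1%:R^-1.
have w01 : 0 <= w <= 1 by rewrite invr_ge0 ltW //= invf_le1 // ler1n.
(* the mean of a :: r is the w-convex combination of G a and the mean of r *)
have -> : (G a + S) * w = w * G a + (1 - w) * (S / k%:R).
  by rewrite /w -addn1 natrD; field; rewrite !gt_eqF // addr_gt0.
have := powR_convex p1 w01 (G0 a) (divr_ge0 S0 (ltW k0)).
move=> /(ler_wpM2l (ltW k1)) /le_trans; apply.
rewrite big_cons mulrDr mulrA mulfV ?gt_eqF // mul1r lerD2l mulrA mulrBr mulr1.
by rewrite mulfV ?gt_eqF // -addn1 natrD addrK.
Qed.

Lemma jensen_powR (T : finType) (p : R) (G : T -> R) :
  1 <= p -> (forall i, 0 <= G i) -> (0 < #|T|)%nat ->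
  #|T|%:R * powR ((\sum_i G i) / #|T|%:R) p <= \sum_i powR (G i) p.
Proof.
move=> p1 G0 T0; have := jensen_powR_seq (r := enum T) p1 G0.
by rewrite -cardE !big_enum; apply.
Qed.

Section WeaklySidorenko.
Variable F : finFieldType.

Lemma card_rV n : #|{: 'rV[F]_n}| = Nat.pow #|F| n.
Proof. by rewrite card_mx mul1n; elim: n => // n IH; rewrite expnS IH. Qed.

Lemma rank_aff_le_weakly_sidorenko m (B : {set 'rV[F]_m}) C :
  weakly_sidorenko B C -> (rank_aff B)%:R <= C.
Proof.
pose zero : {set 'rV[F]_1} := [set 0].
have hom_le1 : (hom_aff B zero <= 1)%nat.
  rewrite /hom_aff -[X in (_ <= X)%nat](cards1 (0 : {ffun 'rV[F]_m -> 'rV[F]_1})).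
  apply/subset_leq_card/subsetP => f /hom_affP [fA f0 _]; rewrite inE.
  apply/eqP/ffunP => x; rewrite ffunE.
  by have [/fA /set1P | xB] := boolP (x \in B); last rewrite f0 ?inE.
move=> /(_ 1%nat zero); cbv zeta; rewrite -card_rV cards1 card_mx !mul1n expn1 div1r.
rewrite -(ler_nat R) in hom_le1; move=> /le_trans /(_ hom_le1).
have q1 : 1 < #|F|%:R :> R by rewrite ltr1n finNzRing_gt1.
have q0 : 0 < #|F|%:R :> R by apply: lt_trans q1.
rewrite -ler_ln ?posrE ?mulr_gt0 ?powR_gt0 ?exprn_gt0 ?invr_gt0 //.
rewrite ln1 lnM ?posrE ?powR_gt0 ?exprn_gt0 ?invr_gt0 // ln_powR lnXn // lnV ?posrE //.
rewrite mulrN -(mulr_natr (ln _)) addrC subr_le0 [X in X <= _]mulrC ler_pM2r //.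
exact: ln_gt0.
Qed.

Lemma weakly_sidorenko_set0 m C : 0 <= C -> weakly_sidorenko (set0 : {set 'rV[F]_m}) C.
Proof.
move=> C0 n A; cbv zeta; rewrite -card_rV.
have -> : rank_aff (set0 : {set 'rV[F]_m}) = 0%nat.
  apply/eqP; rewrite -leqn0; apply/bigmax_leqP => S /andP [/subset_leq_card].
  by rewrite cards0.
have N0 : 0 < #|{: 'rV[F]_n}|%:R :> R by rewrite ltr0n; apply/card_gt0P; exists 0.
rewrite expr0 mulr1; apply: le_trans (powR_le1 _ C0) _.
  by rewrite divr_ge0 ?ler0n //= ler_pdivrMr // mul1r ler_nat max_card.
rewrite ler1n; apply/card_gt0P; exists 0; apply/hom_affP; split=> [x|x _|].
- by rewrite inE.
- by rewrite ffunE.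
- by exists 0, 0 => x; rewrite inE.
Qed.

Section ProductBound.
Variables (m1 m2 : nat) (B1 : {set 'rV[F]_m1}) (B2 : {set 'rV[F]_m2}) (C1 C2 : R).
Hypotheses (wsB1 : weakly_sidorenko B1 C1) (wsB2 : weakly_sidorenko B2 C2).
Variables (n : nat) (A : {set 'rV[F]_n}).
Local Notation N := (#|{: 'rV[F]_n}|%:R : R).
Local Notation d := (\rank (homog_mx B2)).
Local Notation density W := (#|anchors B2 A W|%:R / N).

Let N_gt0 : 0 < N.
Proof. by rewrite ltr0n; apply/card_gt0P; exists 0. Qed.

Lemma sum_powR_density_le x0 y0 : x0 \in B1 -> y0 \in B2 ->
  N ^+ rank_aff B1 * \sum_W powR (density W) C1 <= (hom_aff (prod_set B1 B2) A)%:R * N.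
Proof.
move=> x0B y0B; rewrite mulr_sumr.
apply: (@le_trans _ _ (\sum_W (hom_aff B1 (anchors B2 A W))%:R)).
  apply: ler_sum => W _; have := wsB1 (anchors B2 A W).
  by cbv zeta; rewrite -card_rV mulrC.
by rewrite -natr_sum -natrM ler_nat (sum_hom_aff_anchors_le _ x0B y0B).
Qed.

Lemma powR_density_le_sum : powR (#|A|%:R / N) C2 * N ^+ d <= \sum_W density W.
Proof.
have := wsB2 A; cbv zeta; rewrite -card_rV rank_affE => /le_trans; apply.
by rewrite -mulr_suml -natr_sum ler_pdivlMr // -natrM ler_nat hom_aff_card_le.
Qed.

Lemma hom_aff_prod_ge x0 y0 : x0 \in B1 -> y0 \in B2 ->
  powR (#|A|%:R / N) (C1 * C2) * N ^+ rank_aff (prod_set B1 B2)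
    <= (hom_aff (prod_set B1 B2) A)%:R.
Proof.
move=> x0B y0B.
have N_ge1 : 1 <= N by rewrite ler1n; apply/card_gt0P; exists 0.
have C1_ge1 : 1 <= C1.
  apply: le_trans (rank_aff_le_weakly_sidorenko wsB1).
  by rewrite ler1n (rank_aff_gt0 x0B).
have cardW : #|{: 'M[F]_(d, n)}|%:R = N ^+ d.
  by rewrite !card_mx mul1n -natrX -expnM mulnC.
have W_nonempty : (0 < #|{: 'M[F]_(d, n)}|)%nat by apply/card_gt0P; exists 0.
have density_ge0 W : 0 <= density W by rewrite divr_ge0 // ltW.
have := jensen_powR C1_ge1 density_ge0 W_nonempty; rewrite cardW => jensen.
have mean_ge : powR (#|A|%:R / N) (C1 * C2) <= powR ((\sum_W density W) / N ^+ d) C1.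
  rewrite [C1 * C2]mulrC powRrM.
  apply: (@ge0_ler_powR _ C1); rewrite ?nnegrE ?powR_ge0 //.
  - exact: le_trans C1_ge1.
  - by rewrite divr_ge0 ?sumr_ge0 ?exprn_ge0 ?ltW.
  - by rewrite ler_pdivlMr ?exprn_gt0 // powR_density_le_sum.
rewrite -(ler_pM2r N_gt0) -mulrA -exprSr; apply: le_trans (sum_powR_density_le x0B y0B).
apply: (@le_trans _ _ (powR (#|A|%:R / N) (C1 * C2) * N ^+ (rank_aff B1 + d))).
  rewrite ler_wpM2l ?powR_ge0 // ler_weXn2l // -rank_affE -addn1.
  exact: rank_aff_prod x0B y0B.
rewrite exprD mulrCA; apply: ler_wpM2l; first exact/exprn_ge0/ltW.
apply: le_trans jensen; rewrite mulrC.
by apply: ler_wpM2l; first exact/exprn_ge0/ltW.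
Qed.

End ProductBound.

Lemma weakly_sidorenko_prod m1 m2 (B1 : {set 'rV[F]_m1}) (B2 : {set 'rV[F]_m2}) C1 C2 :
  weakly_sidorenko B1 C1 -> weakly_sidorenko B2 C2 ->
  weakly_sidorenko (prod_set B1 B2) (C1 * C2).
Proof.
move=> wsB1 wsB2; have [-> | [z]] := set_0Vmem (prod_set B1 B2).
  by apply/weakly_sidorenko_set0/mulr_ge0;
    apply: le_trans (rank_aff_le_weakly_sidorenko _); rewrite ?ler0n.
rewrite prod_setP => /andP [x0B y0B] n A; cbv zeta; rewrite -card_rV.
exact: (hom_aff_prod_ge wsB1 wsB2 A x0B y0B).
Qed.

Lemma card_prod_set m1 m2 (B1 : {set 'rV[F]_m1}) (B2 : {set 'rV[F]_m2}) :
  #|prod_set B1 B2| = (#|B1| * #|B2|)%nat.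
Proof.
rewrite /prod_set curry_imset2X card_imset ?cardsX //.
by move=> [x y] [x' y'] /eq_row_mx [-> ->].
Qed.

End WeaklySidorenko.

Theorem theorem1p12 (F : finFieldType) (m1 m2 : nat)
    (B1 : {set 'rV[F]_m1}) (B2 : {set 'rV[F]_m2}) :
  (forall C1 C2 : R,
      weakly_sidorenko B1 C1 -> weakly_sidorenko B2 C2 ->
      weakly_sidorenko (prod_set B1 B2) (C1 * C2)) /\
  (sidorenko B1 -> sidorenko B2 -> sidorenko (prod_set B1 B2)).
Proof.
split=> [C1 C2|]; first exact: weakly_sidorenko_prod.
by rewrite /sidorenko card_prod_set natrM; apply: weakly_sidorenko_prod.
Qed.
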